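(* Let $\mathtt b\ge2$ and let $(\mathtt T_u,r(u))$, $u\in S$, be a finite family of finite rooted graph trees; write $|x|$ for the graph distance from $r(u)$ to $x\in\mathtt T_u$ and, for $1\le i\le|x|$, $x_i$ for the ancestor of $x$ at height $i$. Let $V^u_x$, $x\in\mathtt T_u$, $u\in S$, be independent uniform random variables on $\{1,\dots,\mathtt b\}$, set $Z^u_x=(V^u_{x_1},\dots,V^u_{x_{|x|}})\in\mathbb W_{\mathtt b}$ (with $Z^u_{r(u)}=\varnothing$) and $\mathtt R_u=\{Z^u_x;x\in\mathtt T_u\}$. For $c\in\mathbb N^*$ let $M_c=\sum_{u\in S}\#\{x\in\mathtt T_u:|x|\le c\}$. Let $w_u\in\mathbb W_{\mathtt b}$, $u\in S$ be deterministic. Then there exists an event $A_c$ with $\mathbf P(A_c)\le\mathtt b^{-c}M_c^2$ such that on the complement of $A_c$, $$0\le\sum_{u\in S}\#\mathtt R_u-\#\Big(\bigcup_{u\in S}w_u\ast\mathtt R_u\Big)\le M_c.$$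
   Context: $\mathbb W_{\mathtt b}$ is the set of finite words over $\{1,\dots,\mathtt b\}$; $w\ast v$ denotes concatenation of words and $w\ast\mathtt R=\{w\ast v;v\in\mathtt R\}$. *)

From HB Require Import structures.
From mathcomp Require Import all_boot all_order all_algebra.
Set Implicit Arguments. Unset Strict Implicit. Unset Printing Implicit Defensive.
Import Order.TTheory GRing.Theory Num.Theory.

(* A finite rooted tree in Ulam-Harris form: a duplicate-free list of
   vertices (words over nat), containing the root [::], closed under
   taking prefixes. |x| = size x, ancestor at height i = take i x. *)
Definition is_rooted_tree (T : seq (seq nat)) : Prop :=
  [/\ uniq T, [::] \in T & forall x, x \in T -> forall k, take k x \in T].

Definition vtx (S : finType) (T : S -> seq (seq nat)) : finType :=
  {u : S & seq_sub (T u)}.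

(* sample space: the values V^u_x - 1 in 'I_b of all vertices (uniform
   product measure = normalized counting measure) *)
Definition Omega (b : nat) (S : finType) (T : S -> seq (seq nat)) : finType :=
  {ffun vtx T -> 'I_b}.

Definition prob (b : nat) (S : finType) (T : S -> seq (seq nat))
  (A : {set Omega b T}) : rat := (#|A|%:R / #|Omega b T|%:R)%R.

(* V^u_y in {1,..,b} (0 if y is not a vertex of T u, never used) *)
Definition Vlet (b : nat) (S : finType) (T : S -> seq (seq nat))
  (om : Omega b T) (u : S) (y : seq nat) : nat :=
  oapp (fun v : seq_sub (T u) => (om (Tagged (fun u => seq_sub (T u)) v)).+1)
       0 (insub y).

Definition Zw (b : nat) (S : finType) (T : S -> seq (seq nat))
  (om : Omega b T) (u : S) (x : seq nat) : seq nat :=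
  [seq Vlet om u (take i x) | i <- iota 1 (size x)].

Definition Rset (b : nat) (S : finType) (T : S -> seq (seq nat))
  (om : Omega b T) (u : S) : seq (seq nat) :=
  undup [seq Zw om u x | x <- T u].

Definition Union (b : nat) (S : finType) (T : S -> seq (seq nat))
  (w : S -> seq nat) (om : Omega b T) : seq (seq nat) :=
  undup (flatten [seq [seq w u ++ z | z <- Rset om u] | u <- enum S]).

Definition Mc (S : finType) (T : S -> seq (seq nat)) (c : nat) : nat :=
  \sum_(u : S) count (fun x : seq nat => size x <= c) (T u).

From HB Require Import structures.
From mathcomp Require Import all_boot all_order all_algebra.
From mathcomp Require Import zify.
Import Order.TTheory GRing.Theory Num.Theory.
Set Implicit Arguments. Unset Strict Implicit. Unset Printing Implicit Defensive.

(* If w_u Z^u_x = w_v Z^v_y with u <> v and |x|, |y| > c, say with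
   |w_u| <= |w_v|, then truncating x at height c and y at the matching height
   gives vertices p, q of height <= c, |p| = c, with w_u Z^u_p a prefix of
   w_v Z^v_q.  For a fixed pair (p, q) this fixes the c independent letters of
   tree u along p, an event of probability b^-c; A_c is the union over the at
   most M_c^2 such pairs.  Off A_c the translated words of height > c of
   different trees are distinct, so at most the M_c words of height <= c can
   be lost in the union. *)

Lemma cat_injr (X : Type) (w : seq X) : injective (cat w).
Proof. by move=> s t /(congr1 (drop (size w))); rewrite !drop_size_cat. Qed.

Lemma take_cat_take (X : Type) m (s t : seq X) :
  take m (s ++ t) = take m (s ++ take (m - size s) t).
Proof. by rewrite !take_cat; case: ltnP => // _; rewrite take_takel. Qed.

Lemma card_exists_le (I T : finType) (E : I -> pred T) :
  #|[set x | [exists i, E i x]]| <= \sum_i #|[set x | E i x]|.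
Proof.
rewrite -(sum1dep_card (fun x : T => [exists i : I, E i x])).
under [X in _ <= X]eq_bigr => i _ do rewrite -(sum1dep_card (E i)).
rewrite [X in _ <= X](exchange_big_dep xpredT) //=.
rewrite [X in X <= _]big_mkcond; apply: leq_sum => x _.
by case: existsP => // -[i Ei]; rewrite (bigD1 i).
Qed.

(* Gluing an element of [E] with arbitrary values on [K] is injective. *)
Lemma card_determined_off (I : finType) (b : nat) (K : {set I})
    (E : {set {ffun I -> 'I_b}}) :
    {in E &, forall f g : {ffun I -> 'I_b},
      (forall i, i \notin K -> f i = g i) -> f = g} ->
  #|E| * b ^ #|K| <= b ^ #|I|.
Proof.
move=> determined.
pose glue (ft : {ffun I -> 'I_b} * {ffun {i | i \in K} -> 'I_b}) :=
  [ffun i => if insub i is Some k then ft.2 k else ft.1 i].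
have -> : #|E| * b ^ #|K| = #|setX E [set: {ffun {i | i \in K} -> 'I_b}]|.
  by rewrite cardsX cardsT card_ffun card_ord card_sig; congr (_ * b ^ _);
     apply: eq_card => i; rewrite !inE.
rewrite -(card_in_imset (f := glue)); last first.
  move=> [f1 t1] [f2 t2]; rewrite !inE /= !andbT => Ef1 Ef2 /ffunP eq_glue.
  have -> : t1 = t2 by apply/ffunP => k; move: (eq_glue (val k)); rewrite !ffunE valK.
  congr (_, _); apply: determined => // i Ki.
  by move: (eq_glue i); rewrite !ffunE insubN.
by apply: leq_trans (max_card _) _; rewrite card_ffun card_ord.
Qed.

Lemma prob_le_of_card (b : nat) (S : finType) (T : S -> seq (seq nat))
    (A : {set Omega b T}) m n :
  0 < b -> #|A| * b ^ n <= m * #|Omega b T| -> (prob A <= b%:R ^- n * m%:R)%R.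
Proof.
move=> b_gt0 le_A.
have Omega_gt0 : (0 < #|Omega b T|%:R :> rat)%R.
  by rewrite ltr0n /Omega card_ffun card_ord expn_gt0 b_gt0.
rewrite /prob ler_pdivrMr // -mulrA mulrC ler_pdivlMr ?exprn_gt0 ?ltr0n //.
by rewrite -!natrX -!natrM ler_nat.
Qed.

Lemma size_Union_le (b : nat) (S : finType) (T : S -> seq (seq nat))
    (w : S -> seq nat) (om : Omega b T) :
  size (Union w om) <= \sum_u size (Rset om u).
Proof.
by apply: leq_trans (size_undup _) _; rewrite size_allpairs_dep sumnE big_map big_enum.
Qed.

Section RandomWords.

Variables (b : nat) (S : finType) (T : S -> seq (seq nat)).
Hypothesis tree_T : forall u, is_rooted_tree (T u).

Local Notation vword p := (ssval (tagged p)).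
Local Notation vertex s := (Tagged (fun u => seq_sub (T u)) s).

Lemma take_in_tree u x k : x \in T u -> take k x \in T u.
Proof. by case: (tree_T u) => _ _ closed /closed. Qed.

Lemma Vlet_vertex (om : Omega b T) u (s : seq_sub (T u)) :
  Vlet om u (ssval s) = (om (vertex s)).+1.
Proof. by rewrite /Vlet valK. Qed.

Lemma size_Zw (om : Omega b T) u x : size (Zw om u x) = size x.
Proof. by rewrite size_map size_iota. Qed.

Lemma take_Zw (om : Omega b T) u x k : take k (Zw om u x) = Zw om u (take k x).
Proof.
rewrite /Zw -map_take take_iota size_take_min.
by apply/eq_in_map => i; rewrite mem_iota => /andP[_ lt_i]; rewrite take_takel; lia.
Qed.

Lemma nth_Zw (om : Omega b T) u x i :
  0 < i <= size x -> nth 0 (Zw om u x) i.-1 = Vlet om u (take i x).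
Proof.
move=> /andP[i_gt0 le_i]; rewrite (nth_map 0) ?size_iota; last lia.
by rewrite nth_iota; [congr (Vlet _ _ (take _ _)) | ]; lia.
Qed.

Lemma Zw_ext (om1 om2 : Omega b T) u x :
  (forall s : seq_sub (T u), om1 (vertex s) = om2 (vertex s)) ->
  Zw om1 u x = Zw om2 u x.
Proof.
by move=> eq_om; apply: eq_map => i; rewrite /Vlet; case: insub => //= s; rewrite eq_om.
Qed.

Definition ancestors u x : {set vtx T} :=
  [set k | (tag k == u) && (vword k \in [seq take i x | i <- iota 1 (size x)])].

Lemma card_ancestors u x : x \in T u -> size x <= #|ancestors u x|.
Proof.
move=> Tx; have uniq_takes : uniq [seq take i x | i <- iota 1 (size x)].
  rewrite map_inj_in_uniq ?iota_uniq // => i j; rewrite !mem_iota => ? ? eq_take.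
  by have := congr1 size eq_take; rewrite !size_takel; lia.
have := uniq_leq_size uniq_takes; rewrite size_map size_iota cardE.
rewrite -(size_map (fun k : vtx T => vword k)); apply=> _ /mapP[i i_in ->].
apply/mapP; exists (vertex (SeqSub (take_in_tree i Tx))) => //.
by rewrite mem_enum inE /= eqxx; apply: map_f.
Qed.

Lemma eq_on_ancestors (om1 om2 : Omega b T) u x :
  Zw om1 u x = Zw om2 u x -> {in ancestors u x, om1 =1 om2}.
Proof.
move=> eq_Z [v s]; rewrite inE /= => /andP[/eqP eq_vu /mapP[i i_in eq_s]]; subst v.
have i_range : 0 < i <= size x by move: i_in; rewrite mem_iota; lia.
have := congr1 (fun z => nth 0 z i.-1) eq_Z; rewrite /= !nth_Zw // -eq_s !Vlet_vertex.
by move=> [/val_inj].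
Qed.

Variables (w : S -> seq nat) (c : nat).

Local Notation shifted om p := (w (tag p) ++ Zw om (tag p) (vword p)).

Definition collision_pair (p q : vtx T) : bool :=
  [&& tag p != tag q, size (vword p) == c & size (vword q) <= c].

Definition prefix_collision (om : Omega b T) (p q : vtx T) : bool :=
  collision_pair p q && (shifted om p == take (size (w (tag p)) + c) (shifted om q)).

Definition bad_event : {set Omega b T} :=
  [set om | [exists pq : vtx T * vtx T, prefix_collision om pq.1 pq.2]].

Lemma card_prefix_collision p q : 0 < b ->
  #|[set om | prefix_collision om p q]| * b ^ c <= collision_pair p q * #|Omega b T|.
Proof.
move=> b_gt0; case cpq: (collision_pair p q); last first.
  rewrite (_ : [set om | _] = set0) ?cards0 //.
  by apply/setP => om; rewrite !inE /prefix_collision cpq.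
move: cpq; case: p q => [u xs] [v ys]; rewrite mul1n /collision_pair /=.
move=> /and3P[neq_uv /eqP size_x size_y].
have c_le : c <= #|ancestors u (ssval xs)| by rewrite -size_x card_ancestors ?ssvalP.
apply: leq_trans (leq_mul (leqnn _) (leq_pexp2l b_gt0 c_le)) _.
(* Off the ancestors of p, om fixes Z along q (another tree), hence along p. *)
rewrite /Omega card_ffun card_ord; apply: card_determined_off => om1 om2.
rewrite !inE /prefix_collision /collision_pair /= neq_uv size_x eqxx size_y /=.
move=> /eqP eq1 /eqP eq2 agree.
have eq_Zv : Zw om1 v (ssval ys) = Zw om2 v (ssval ys).
  by apply: Zw_ext => s; apply: agree; rewrite inE /= eq_sym (negbTE neq_uv).
have eq_Zu : Zw om1 u (ssval xs) = Zw om2 u (ssval xs).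
  by apply: (@cat_injr _ (w u)); rewrite eq1 eq2 eq_Zv.
apply/ffunP => k; case: (boolP (k \in ancestors u (ssval xs))) => [|/agree//].
exact: eq_on_ancestors eq_Zu k.
Qed.

Lemma card_shallow_vertices : #|[set p : vtx T | size (vword p) <= c]| <= Mc T c.
Proof.
pose g (p : vtx T) := (tag p, vword p).
have g_inj : injective g by move=> [u s] [v t] [eq_uv]; subst v => /val_inj->.
pose L := [seq (u, x) | u <- enum S, x <- [seq x <- T u | size x <= c]].
have -> : Mc T c = size L.
  rewrite size_allpairs_dep sumnE big_map big_enum.
  by apply: eq_bigr => u _; rewrite size_filter.
rewrite cardE -(size_map g); apply: uniq_leq_size.
  by rewrite (map_inj_uniq g_inj) enum_uniq.
move=> z /mapP[p]; rewrite mem_enum inE => shallow_p ->.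
apply/allpairsPdep; exists (tag p), (vword p).
by rewrite mem_enum mem_filter shallow_p ssvalP.
Qed.

Lemma card_bad_event : 0 < b -> #|bad_event| * b ^ c <= Mc T c ^ 2 * #|Omega b T|.
Proof.
move=> b_gt0; set P := [set p : vtx T | size (vword p) <= c].
have union_bound := card_exists_le (fun pq om => prefix_collision om pq.1 pq.2).
apply: leq_trans (leq_mul union_bound (leqnn _)) _; rewrite big_distrl.
apply: leq_trans (leq_sum _ (fun pq _ => card_prefix_collision pq.1 pq.2 b_gt0)) _.
rewrite -big_distrl leq_mul2r; apply/orP; right.
apply: (@leq_trans #|setX P P|); last by rewrite cardsX -mulnn leq_mul ?card_shallow_vertices.
rewrite -sum1_card [X in _ <= X]big_mkcond; apply: leq_sum => -[p q] _ /=.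
case: (boolP (collision_pair p q)) => //= /and3P[_ /eqP size_p size_q].
by rewrite !inE size_p leqnn size_q.
Qed.

Lemma bad_event_of_collision (om : Omega b T) u v x y :
  u != v -> x \in T u -> y \in T v -> c < size x -> c < size y ->
  size (w u) <= size (w v) -> w u ++ Zw om u x = w v ++ Zw om v y ->
  om \in bad_event.
Proof.
move=> neq_uv Tx Ty deep_x deep_y le_w eq_xy.
set n := size (w u) + c - size (w v).
rewrite inE; apply/existsP.
exists (vertex (SeqSub (take_in_tree c Tx)), vertex (SeqSub (take_in_tree n Ty))).
rewrite /prefix_collision /collision_pair /= neq_uv size_takel ?(ltnW deep_x) //=.
rewrite size_take_min geq_min leq_subLR leq_add2r le_w /= -!take_Zw.
have -> : w u ++ take c (Zw om u x) = take (size (w u) + c) (w u ++ Zw om u x).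
  by rewrite takeD take_size_cat // drop_size_cat.
by rewrite eq_xy take_cat_take !eqxx.
Qed.

Lemma deep_shifted_words_neq (om : Omega b T) u v x y :
  om \notin bad_event -> u != v -> x \in T u -> y \in T v ->
  c < size x -> c < size y -> w u ++ Zw om u x != w v ++ Zw om v y.
Proof.
move=> /negP good neq_uv Tx Ty deep_x deep_y; apply/eqP => eq_xy; apply: good.
have [le_w | /ltnW le_w] := leqP (size (w u)) (size (w v)).
  exact: bad_event_of_collision eq_xy.
by apply: (bad_event_of_collision _ Ty Tx) (esym eq_xy); rewrite // eq_sym.
Qed.

Lemma deep_count_le_size_Union (om : Omega b T) : om \notin bad_event ->
  \sum_u count (fun z => c < size z) (Rset om u) <= size (Union w om).
Proof.
move=> good; set deep := fun u => [seq z <- Rset om u | c < size z].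
have -> : \sum_u count (fun z => c < size z) (Rset om u)
          = size [seq w u ++ z | u <- enum S, z <- deep u].
  rewrite size_allpairs_dep sumnE big_map big_enum.
  by apply: eq_bigr => u _; rewrite size_filter.
apply: uniq_leq_size => [|_ /allpairsPdep[u [z [_ deep_z ->]]]]; last first.
  rewrite mem_undup; apply/allpairsPdep; exists u, z.
  by move: deep_z; rewrite mem_enum mem_filter => /andP[].
apply: allpairs_uniq_dep => [|u _|]; first exact: enum_uniq.
  exact/filter_uniq/undup_uniq.
move=> _ _ /allpairsPdep[u [z [_ deep_z ->]]] /allpairsPdep[v [z' [_ deep_z' ->]]].
move=> /= eq_zz'.
have [eq_uv | neq_uv] := eqVneq u v.
  by subst v; move/cat_injr: eq_zz' => ->.
move: deep_z deep_z' eq_zz'; rewrite !mem_filter !mem_undup.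
move=> /andP[deep_x /mapP[x Tx eq_z]] /andP[deep_y /mapP[y Ty eq_z']]; subst z z'.
rewrite !size_Zw in deep_x deep_y.
by move/eqP; rewrite (negbTE (deep_shifted_words_neq good neq_uv Tx Ty deep_x deep_y)).
Qed.

Lemma shallow_count_le_Mc (om : Omega b T) :
  \sum_u count (fun z => size z <= c) (Rset om u) <= Mc T c.
Proof.
apply: leq_sum => u _; rewrite -size_filter filter_undup (leq_trans (size_undup _)) //.
by rewrite size_filter count_map; apply: eq_leq; apply: eq_count => x /=; rewrite size_Zw.
Qed.

End RandomWords.

Unset Implicit Arguments.

Theorem lemma3p9 (b : nat) (S : finType) (T : S -> seq (seq nat))
  (w : S -> seq nat) (c : nat) :
  (2 <= b)%N ->
  (forall u, is_rooted_tree (T u)) ->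
  (forall u, all (fun a => (0 < a <= b)%N) (w u)) ->
  (0 < c)%N ->
  exists A : {set Omega b T},
    (prob A <= (b%:R ^- c) * (Mc T c)%:R ^+ 2)%R /\
    forall om : Omega b T, om \notin A ->
      (0 <= (\sum_(u : S) size (Rset om u))%:Z - (size (Union w om))%:Z
         <= (Mc T c)%:Z)%R.
Proof.
move=> b_ge2 tree_T _ _; have b_gt0 : 0 < b by apply: ltnW.
exists (bad_event b T w c); split.
  rewrite -[(_%:R ^+ 2)%R]natrX.
  exact: prob_le_of_card b_gt0 (card_bad_event tree_T w c b_gt0).
move=> om good.
have split_shallow_deep : \sum_u size (Rset om u) =
    \sum_u count (fun z => size z <= c) (Rset om u)
    + \sum_u count (fun z => c < size z) (Rset om u).
  rewrite -big_split; apply: eq_bigr => u _ /=.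
  rewrite -(count_predC (fun z => size z <= c)); congr addn.
  by apply: eq_count => z; rewrite /= ltnNge.
have := size_Union_le w om; have := shallow_count_le_Mc c om.
have := deep_count_le_size_Union tree_T good.
rewrite split_shallow_deep; lia.
Qed.
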